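(* Fix $n\ge1$ and $\kappa>0$. Let $\mho:\mathcal A_n^*\to(\mathrm{Mat}_n(\mathbb T),\odot)$ be the monoid homomorphism with $\mho(e)=E$ and $\mho(a_\ell)=A^{(\ell)}$ for $\ell=1,\dots,n$. Then for all $u,v\in\mathcal A_n^*$, $$u\equiv_{\mathrm{clk}}v\iff \mho(u)=\mho(v).$$ Hence $\mho$ induces a monoid isomorphism from the cloaktic monoid $\mathcal K_n=\mathcal A_n^*/{\equiv_{\mathrm{clk}}}$ onto the submonoid of $(\mathrm{Mat}_n(\mathbb T),\odot)$ generated by $A^{(1)},\dots,A^{(n)}$ (with identity $E$).
   Context: $\mathcal A_n=\{a_1<\cdots<a_n\}$, $e$ the empty word. Tropical semiring $\mathbb T=\mathbb R\cup\{-\infty\}$, $\oplus=\max$, $\odot=+$; $(A\odot B)_{i,j}=\max_t(a_{i,t}+b_{t,j})$. $A^{(\ell)}_{i,j}=\kappa$ if $i\le\ell\le j$, $=0$ if $i\le j$ but not $i\le\ell\le j$, $=-\infty$ if $i>j$; $E_{i,j}=0$ for $i\le j$, $-\infty$ for $i>j$. A subword is a not necessarily contiguous subsequence. For $w\in\mathcal A_n^*$ and $1\le i\le j\le n$, $L_{[i,j]}(w)$ is the maximal length of a nondecreasing subword of $w$ with all letters in $\{a_i,\dots,a_j\}$ ($0$ if none); $u\equiv_{\mathrm{clk}}v$ iff $L_{[i,j]}(u)=L_{[i,j]}(v)$ for all $1\le i\le j\le n$. *)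

From HB Require Import structures.
From mathcomp Require Import all_boot all_order all_algebra.
Set Implicit Arguments. Unset Strict Implicit. Unset Printing Implicit Defensive.
Import Order.TTheory GRing.Theory Num.Theory.

(* Tropical semiring T = R u {-oo} over an ordered field R:
   None = -oo, Some x = x; (+) = max, (.) = +. *)
Section Trop.
Variable R : realFieldType.

Definition trop := option R.

Definition tplus (x y : trop) : trop :=
  match x, y with
  | None, _ => y
  | _, None => x
  | Some a, Some b => Some (Num.max a b)
  end.

Definition ttimes (x y : trop) : trop :=
  match x, y with
  | Some a, Some b => Some (a + b)%R
  | _, _ => None
  end.

Definition tmul (n : nat) (A B : 'M[trop]_n) : 'M[trop]_n :=
  \matrix_(i < n, j < n) \big[tplus/None]_(t < n) ttimes (A i t) (B t j).

Definition Etrop (n : nat) : 'M[trop]_n :=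
  \matrix_(i < n, j < n) if (i <= j)%N then Some 0%R else None.

(* A^(l): letters a_1 < ... < a_n are encoded as ordinals 0 < ... < n-1 *)
Definition Agen (n : nat) (kappa : R) (l : 'I_n) : 'M[trop]_n :=
  \matrix_(i < n, j < n)
    if (i <= j)%N then (if (i <= l <= j)%N then Some kappa else Some 0%R)
    else None.

Definition mho (n : nat) (kappa : R) (w : seq 'I_n) : 'M[trop]_n :=
  foldr (fun a M => tmul (Agen kappa a) M) (Etrop n) w.

End Trop.

Definition Lint (n : nat) (i j : 'I_n) (w : seq 'I_n) : nat :=
  \max_(m : (size w).-tuple bool |
          sorted (fun a b : 'I_n => (a <= b)%N) (mask m w)
          && all (fun a : 'I_n => (i <= a <= j)%N) (mask m w))
    size (mask m w).

Definition clk (n : nat) (u v : seq 'I_n) : Prop :=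
  forall i j : 'I_n, (i <= j)%N -> Lint i j u = Lint i j v.

From HB Require Import structures.
From mathcomp Require Import all_boot all_order all_algebra.
Import Order.TTheory GRing.Theory Num.Theory.
Set Implicit Arguments. Unset Strict Implicit.

(* The quantity L_[t,j](w) obeys a recursion on the first letter a of w: a
   longest nondecreasing subword in [t,j] either skips a, or starts with a and
   continues with a longest one of the tail in [a,j].  The matrix product
   A^(a) (.) M, with M_{s,j} = kappa * L_[s,j](w), performs exactly this
   recursion, since its (t,j) entry is the maximum over t <= s <= j of
   kappa [a in [t,s]] + kappa L_[s,j](w).  Hence mho(w) is the upper triangular
   matrix of the values kappa L_[t,j](w), and since kappa > 0 two such matrices
   agree iff all the L_[t,j] agree. *)

Section LongestNondecreasingSubword.
Variable n : nat.
Implicit Types (s w : seq 'I_n) (t j : nat).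

Definition ord_le : rel 'I_n := fun a b => (a <= b)%N.

Lemma ord_le_trans : transitive ord_le.
Proof. by move=> b a c; apply: leq_trans. Qed.

Definition in_range t j : pred 'I_n := fun a => (t <= a <= j)%N.

Fixpoint lnds t j w : nat :=
  if w is a :: w' then
    maxn (lnds t j w') (if in_range t j a then (lnds a j w').+1 else 0)
  else 0.

Lemma lnds_anti t t' j w : (t <= t')%N -> (lnds t' j w <= lnds t j w)%N.
Proof.
elim: w t t' => [|a w IHw] t t' le_tt' //=.
rewrite geq_max leq_max IHw //=; case: ifP => // /andP[le_t'a le_aj].
by rewrite /in_range (leq_trans le_tt' le_t'a) le_aj leq_max leqnn orbT.
Qed.

Lemma sorted_in_range x s t j :
  sorted ord_le (x :: s) -> all (in_range t j) s -> all (in_range x j) s.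
Proof.
move=> /(order_path_min ord_le_trans)/allP le_xs /allP range_s.
apply/allP => y ys; apply/andP; split; first exact: le_xs.
by case/andP: (range_s y ys).
Qed.

Lemma lnds_ub s w t j :
  subseq s w -> sorted ord_le s -> all (in_range t j) s ->
  (size s <= lnds t j w)%N.
Proof.
elim: w s t => [|a w IHw] [|x s] t //= sub_sw sorted_xs /andP[range_x range_s].
case: eqP sub_sw => [<- | _] sub_sw; last first.
  by rewrite leq_max (IHw (x :: s)) //= range_x.
rewrite range_x leq_max ltnS (IHw s) ?orbT //; first exact: path_sorted sorted_xs.
exact: sorted_in_range sorted_xs range_s.
Qed.

Lemma lnds_witness w t j :
  exists2 s, subseq s w &
    [/\ sorted ord_le s, all (in_range t j) s & size s = lnds t j w].
Proof.
elim: w t => [|a w IHw] t; first by exists [::].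
have [s sub_sw [sorted_s range_s size_s]] := IHw t.
have skip_a : exists2 s, subseq s (a :: w) &
    [/\ sorted ord_le s, all (in_range t j) s & size s = lnds t j w].
  by exists s => //; apply: subseq_trans sub_sw (subseq_cons w a).
rewrite [lnds t j _]/=; case: ifP => [range_a | _]; last by rewrite maxn0; exact: skip_a.
have [_ | _] := leqP (lnds a j w).+1 (lnds t j w); first exact: skip_a.
have [s' sub_s'w [sorted_s' range_s' size_s']] := IHw a.
exists (a :: s'); first by rewrite /= eqxx.
split; last by rewrite /= size_s'.
- rewrite /= path_min_sorted //.
  by apply/allP => y /(allP range_s') /andP[].
- rewrite /= range_a; apply/allP => y /(allP range_s') /andP[le_ay le_yj].
  by rewrite /in_range le_yj (leq_trans _ le_ay) //; case/andP: range_a.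
Qed.

Lemma Lint_lnds (i j : 'I_n) w : Lint i j w = lnds i j w.
Proof.
apply/eqP; rewrite eqn_leq; apply/andP; split.
  apply/bigmax_leqP => m /andP[sorted_m range_m].
  exact: lnds_ub (mask_subseq m w) sorted_m range_m.
have [s sub_sw [sorted_s range_s <-]] := lnds_witness w i j.
have [m size_m eq_s] := subseqP sub_sw; subst s.
have size_m' : size m == size w by rewrite size_m.
by apply: (leq_bigmax_cond (Tuple size_m')); apply/andP.
Qed.

End LongestNondecreasingSubword.

Section TropicalMatrices.
Variable R : realFieldType.
Local Notation T := (trop R).

Lemma tplusA : associative (@tplus R).
Proof. by case=> [a|] [b|] [c|] //=; rewrite maxA. Qed.

Lemma tplusC : commutative (@tplus R).
Proof. by case=> [a|] [b|] //=; rewrite maxC. Qed.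

Lemma tplus0 : left_id None (@tplus R).
Proof. by case. Qed.

HB.instance Definition _ :=
  Monoid.isComLaw.Build T None (@tplus R) tplusA tplusC tplus0.

Lemma ttimesA : associative (@ttimes R).
Proof. by case=> [a|] [b|] [c|] //=; rewrite addrA. Qed.

Lemma ttimes0 (x : T) : ttimes x None = None.
Proof. by case: x. Qed.

Lemma ttimesDr (x y z : T) : ttimes x (tplus y z) = tplus (ttimes x y) (ttimes x z).
Proof.
case: x y z => [a|] [b|] [c|] //=; congr Some.
by case: (lerP b c) => [le_bc | /ltW le_cb];
  [rewrite max_r // lerD2l | rewrite max_l // lerD2l].
Qed.

Lemma ttimesDl (x y z : T) : ttimes (tplus y z) x = tplus (ttimes y x) (ttimes z x).
Proof.
case: x y z => [a|] [b|] [c|] //=; congr Some.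
by case: (lerP b c) => [le_bc | /ltW le_cb];
  [rewrite max_r // lerD2r | rewrite max_l // lerD2r].
Qed.

Lemma tmulA (n : nat) (A B C : 'M[T]_n) : tmul A (tmul B C) = tmul (tmul A B) C.
Proof.
apply/matrixP => i j; rewrite !mxE.
under eq_bigr => s _ do
  rewrite mxE (big_morph (ttimes (A i s)) (ttimesDr (A i s)) (ttimes0 (A i s))).
rewrite exchange_big; apply: eq_bigr => t _; rewrite mxE.
rewrite (big_morph (fun y => ttimes y (C t j)) (ttimesDl (C t j))
                   (erefl : ttimes None (C t j) = None)).
by apply: eq_bigr => s _; rewrite ttimesA.
Qed.

Definition trop_le (o : T) (x : R) := if o is Some y then (y <= x)%R else true.

Lemma big_tplus_attained (n : nat) (F : 'I_n -> T) (x : R) (s0 : 'I_n) :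
  (forall s, trop_le (F s) x) -> F s0 = Some x ->
  \big[@tplus R/None]_(s < n) F s = Some x.
Proof.
move=> le_Fx F_s0; rewrite (bigD1 s0) //= F_s0.
have : trop_le (\big[@tplus R/None]_(s < n | s != s0) F s) x.
  apply: (big_ind (trop_le^~ x)) => // -[a|] [b|] //= le_ax le_bx.
  by rewrite ge_max le_ax.
by case: (\big[_/_]_(_ < _ | _) _) => [b|] //= le_bx; rewrite max_l.
Qed.

End TropicalMatrices.

Section MhoComputesLnds.
Variables (R : realFieldType) (n : nat) (kappa : R).
Hypothesis kappa_gt0 : (0 < kappa)%R.
Implicit Types (u v w : seq 'I_n).

Definition lnds_mx w : 'M[trop R]_n :=
  \matrix_(t, j) if (t <= j)%N then Some (kappa *+ lnds t j w)%R else None.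

Lemma lnds_mx_eq u v :
  lnds_mx u = lnds_mx v <->
  forall t j : 'I_n, (t <= j)%N -> lnds t j u = lnds t j v.
Proof.
split=> [eq_uv t j le_tj | eq_uv].
  have := congr1 (fun M : 'M_n => M t j) eq_uv; rewrite !mxE le_tj => -[].
  by apply: mulrIn; rewrite gt_eqF.
by apply/matrixP => t j; rewrite !mxE; case: ifP => // le_tj; rewrite eq_uv.
Qed.

Lemma kappa_mulrn_le (a b : nat) : (a <= b)%N -> (kappa *+ a <= kappa *+ b)%R.
Proof. by move=> le_ab; rewrite ler_pMn2l. Qed.

Lemma tmul_lnds_mx_below (A : 'M[trop R]_n) w (t j : 'I_n) :
  (forall i k : 'I_n, (k < i)%N -> A i k = None) ->
  (j < t)%N -> tmul A (lnds_mx w) t j = None.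
Proof.
move=> upper_A lt_jt; rewrite mxE big1 // => s _; rewrite mxE.
case: (ltnP s t) => [/upper_A -> // | le_ts].
by rewrite leqNgt (leq_trans lt_jt le_ts) ttimes0.
Qed.

Lemma tmul_Etrop_lnds_mx w : tmul (Etrop R n) (lnds_mx w) = lnds_mx w.
Proof.
apply/matrixP => t j; rewrite [RHS]mxE.
case: leqP => [le_tj | lt_jt]; last first.
  by apply: tmul_lnds_mx_below => // i k lt_ki; rewrite mxE leqNgt lt_ki.
rewrite mxE; apply: (big_tplus_attained (s0 := t)) => [s|]; rewrite !mxE.
  case: (leqP t s) => //= le_ts; case: (leqP s j) => //= le_sj.
  by rewrite add0r kappa_mulrn_le // lnds_anti.
by rewrite leqnn le_tj /= add0r.
Qed.

Lemma tmul_Agen_lnds_mx (a : 'I_n) w :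
  tmul (Agen kappa a) (lnds_mx w) = lnds_mx (a :: w).
Proof.
apply/matrixP => t j; rewrite [RHS]mxE.
case: leqP => [le_tj | lt_jt]; last first.
  by apply: tmul_lnds_mx_below => // i k lt_ki; rewrite mxE leqNgt lt_ki.
have le_Agen s : trop_le (ttimes (Agen kappa a t s) (lnds_mx w s j))
                         (kappa *+ lnds t j (a :: w))%R.
  rewrite !mxE; case: (leqP t s) => //= le_ts.
  case: (leqP s j) => [le_sj | _]; last by rewrite ttimes0.
  case: ifP => [/andP[le_ta le_as] | _] /=.
    rewrite -mulrS kappa_mulrn_le // leq_max /in_range le_ta (leq_trans le_as le_sj).
    by rewrite ltnS lnds_anti ?orbT.
  by rewrite add0r kappa_mulrn_le // leq_max lnds_anti.
rewrite mxE; move: le_Agen; rewrite [lnds t j _]/=.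
have [le_take | lt_skip] :=
  leqP (if in_range t j a then (lnds a j w).+1 else 0) (lnds t j w).
- move=> le_Agen.
  apply: (big_tplus_attained le_Agen (s0 := t)).
  rewrite !mxE leqnn le_tj /=; case: ifP => [a_at_t | _] /=; last by rewrite add0r.
  have a_eq_t : a = t by apply/val_inj/eqP; rewrite eqn_leq andbC.
  by rewrite a_eq_t /in_range leqnn le_tj /= ltnn in le_take.
- move=> le_Agen.
  have range_a : in_range t j a by move: lt_skip; case: ifP.
  rewrite range_a in le_Agen *; case/andP: range_a => le_ta le_aj.
  apply: (big_tplus_attained le_Agen (s0 := a)).
  by rewrite !mxE le_ta le_aj leqnn /= mulrS.
Qed.

Lemma mho_lnds_mx w : mho kappa w = lnds_mx w.
Proof.
elim: w => [|a w IHw]; first by apply/matrixP => t j; rewrite !mxE.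
by rewrite -tmul_Agen_lnds_mx -IHw.
Qed.

Lemma mho_cat u v : mho kappa (u ++ v) = tmul (mho kappa u) (mho kappa v).
Proof.
elim: u => [|a u IHu]; first by rewrite /= mho_lnds_mx tmul_Etrop_lnds_mx.
by rewrite cat_cons [LHS]/= IHu tmulA.
Qed.

End MhoComputesLnds.

Theorem mainTheorem7 (R : realFieldType) (n : nat) (kappa : R)
    (hn : (1 <= n)%N) (hk : (0 < kappa)%R) :
  (* mho is a monoid homomorphism with mho(e) = E *)
  mho kappa [::] = Etrop R n /\
  (forall u v : seq 'I_n, mho kappa (u ++ v) = tmul (mho kappa u) (mho kappa v)) /\
  (* main claim *)
  (forall u v : seq 'I_n, clk u v <-> mho kappa u = mho kappa v).
Proof.
split=> //; split=> [u v | u v]; first exact: mho_cat.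
rewrite !(mho_lnds_mx hk); split=> [clk_uv | /(lnds_mx_eq hk) eq_uv i j le_ij].
  by apply/(lnds_mx_eq hk) => t j le_tj; rewrite -!Lint_lnds clk_uv.
by rewrite !Lint_lnds eq_uv.
Qed.
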